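(* Let $X$ be a $T_1$ topological space. An ideal $I$ of $T''(X)$ is a $z$-ideal if and only if for all $f\in T''(X)$ and $g\in I$ with $Z(f)\supseteq Z(g)$ we have $f\in I$.
   Context: $C(X)$ is the ring of real-valued continuous functions on $X$; a cozero set is a set $\{x: h(x)\neq 0\}$ with $h\in C(X)$. $T''(X)$ is the ring (under pointwise operations) of all functions $f\colon X\to\mathbb{R}$ for which there is a dense cozero set $U$ of $X$ with $f|_U$ continuous. $Z(f)=\{x\in X: f(x)=0\}$. In a commutative ring $R$ with unity, $M(a)$ is the intersection of all maximal ideals containing $a$, and an ideal $I$ is a $z$-ideal if $M(a)\subseteq I$ for all $a\in I$. *)

From HB Require Import structures.
From mathcomp Require Import all_boot all_order all_algebra.
From mathcomp Require Import all_classical all_reals all_analysis.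
Set Implicit Arguments. Unset Strict Implicit. Unset Printing Implicit Defensive.
Import Order.TTheory GRing.Theory Num.Theory.
Import numFieldNormedType.Exports.
Local Open Scope classical_set_scope.
Local Open Scope ring_scope.

Section Tpp.
Variables (R : realType) (X : topologicalType).

Definition cozero (h : X -> R) : set X := [set x | h x != 0].

Definition Zset (f : X -> R) : set X := [set x | f x = 0].

Definition Tpp : set (X -> R) :=
  [set f | exists h : X -> R, continuous h /\ dense (cozero h) /\
           {within cozero h, continuous f}].

Definition is_ideal (I : set (X -> R)) : Prop :=
  [/\ I `<=` Tpp,
      I (fun _ => 0),
      (forall f g, I f -> I g -> I (f \- g)) &
      (forall f g, Tpp f -> I g -> I (f \* g))].

Definition is_maximal_ideal (M : set (X -> R)) : Prop :=
  [/\ is_ideal M, M != Tpp &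
      forall J, is_ideal J -> M `<=` J -> J != Tpp -> J = M].

Definition Mof (a : X -> R) : set (X -> R) :=
  [set f | Tpp f /\ forall M, is_maximal_ideal M -> M a -> M f].

Definition is_z_ideal (I : set (X -> R)) : Prop :=
  forall a, I a -> Mof a `<=` I.

End Tpp.

(** A maximal ideal [M] of T''(X) containing [g] contains every [f] with
    Z(g) ⊆ Z(f): otherwise 1 = m + t f for some [m] in [M], and then
    m² + g² is an element of [M] without zeros, hence a unit of T''(X).
    Conversely the kernels M_x = {f | f(x) = 0} of the evaluations are
    maximal ideals, so [f ∈ M(g)] forces Z(g) ⊆ Z(f). *)

From HB Require Import structures.
From mathcomp Require Import all_boot all_order all_algebra.
From mathcomp Require Import all_classical all_reals all_analysis.
Set Implicit Arguments. Unset Strict Implicit. Unset Printing Implicit Defensive.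
Import Order.TTheory GRing.Theory Num.Theory.
Import numFieldNormedType.Exports.
Local Open Scope classical_set_scope.
Local Open Scope ring_scope.

Section TppRing.
Variables (R : realType) (X : topologicalType).
Implicit Types (f g h : X -> R).

Lemma open_cozero h : continuous h -> open (cozero h).
Proof. by move=> hc; exact: ((continuousP _).1 hc _ (@open_neq R 0)). Qed.

Lemma cozeroM h1 h2 : cozero (h1 \* h2) = cozero h1 `&` cozero h2.
Proof.
apply/seteqP; split => x; rewrite /cozero /=.
  by rewrite mulf_eq0 negb_or => /andP.
by move=> [? ?]; rewrite mulf_neq0.
Qed.

Lemma Tpp_common_cozero f g : Tpp f -> Tpp g ->
  exists h, [/\ continuous h, dense (cozero h),
    {within cozero h, continuous f} & {within cozero h, continuous g}].
Proof.
move=> [h1 [c1 [d1 w1]]] [h2 [c2 [d2 w2]]].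
exists (h1 \* h2); rewrite cozeroM; split.
- by move=> x; exact: (continuousM (c1 x) (c2 x)).
- by apply: denseI => //; exact: open_cozero.
- exact: continuous_subspaceW w1.
- exact: continuous_subspaceW w2.
Qed.

Lemma TppD f g : Tpp f -> Tpp g -> Tpp (f \+ g).
Proof.
move=> /Tpp_common_cozero H /H [h [c d w1 w2]].
by exists h; split=> //; split=> // x; exact: (continuousD (w1 x) (w2 x)).
Qed.

Lemma TppB f g : Tpp f -> Tpp g -> Tpp (f \- g).
Proof.
move=> /Tpp_common_cozero H /H [h [c d w1 w2]].
by exists h; split=> //; split=> // x; exact: (continuousB (w1 x) (w2 x)).
Qed.

Lemma TppM f g : Tpp f -> Tpp g -> Tpp (f \* g).
Proof.
move=> /Tpp_common_cozero H /H [h [c d w1 w2]].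
by exists h; split=> //; split=> // x; exact: (continuousM (w1 x) (w2 x)).
Qed.

Lemma Tpp_cst (c : R) : Tpp (fun _ : X => c).
Proof.
exists (fun _ => 1); split; first exact: cst_continuous.
split; last exact: cst_continuous.
have -> : cozero (fun _ : X => 1 : R) = setT.
  by apply/seteqP; split => x //= _; rewrite /cozero /= oner_neq0.
by move=> O O0 _; rewrite setIT.
Qed.

Lemma TppV f : Tpp f -> (forall x, f x != 0) -> Tpp (fun x => (f x)^-1).
Proof.
move=> [h [c [d w]]] nz.
by exists h; split=> //; split=> // x; exact: (continuousV (nz x) (w x)).
Qed.

End TppRing.

Section Ideals.
Variables (R : realType) (X : topologicalType) (I : set (X -> R)).
Hypothesis idI : is_ideal I.
Implicit Types (f g u : X -> R).

Lemma ideal_sub : I `<=` @Tpp R X.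
Proof. by case: idI. Qed.

Lemma ideal0 : I (fun _ => 0).
Proof. by case: idI. Qed.

Lemma idealB f g : I f -> I g -> I (f \- g).
Proof. by case: idI => _ _ + _; apply. Qed.

Lemma idealM f g : Tpp f -> I g -> I (f \* g).
Proof. by case: idI => _ _ _; apply. Qed.

Lemma idealD f g : I f -> I g -> I (f \+ g).
Proof.
move=> If Ig; have -> : f \+ g = f \- ((fun _ => 0) \- g).
  by apply/funext => x /=; rewrite sub0r opprK.
by apply: idealB => //; apply: idealB => //; exact: ideal0.
Qed.

Lemma ideal_eqT_nowhere_zero u : I u -> (forall x, u x != 0) -> I = @Tpp R X.
Proof.
move=> Iu nzu; apply/seteqP; split; first exact: ideal_sub.
have I1 : I (fun _ => 1).
  have -> : (fun _ => 1) = (fun x => (u x)^-1) \* u.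
    by apply/funext => x /=; rewrite mulVf.
  by apply: idealM => //; apply: TppV nzu; exact: ideal_sub.
move=> t Tt; have -> : t = t \* (fun _ => 1) by apply/funext => x /=; rewrite mulr1.
exact: idealM.
Qed.

End Ideals.

Section EvaluationKernel.
Variables (R : realType) (X : topologicalType).

Definition eval_kernel (x : X) : set (X -> R) := [set f | Tpp f /\ f x = 0].

Lemma eval_kernel_ideal x : is_ideal (eval_kernel x).
Proof.
split.
- by move=> f [].
- by split; [exact: Tpp_cst|].
- by move=> f g [Tf fx] [Tg gx]; split; [exact: TppB|rewrite /= fx gx subr0].
- by move=> f g Tf [Tg gx]; split; [exact: TppM|rewrite /= gx mulr0].
Qed.

Lemma eval_kernel_maximal x : is_maximal_ideal (eval_kernel x).
Proof.
have idK := eval_kernel_ideal x.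
split=> //.
  apply/eqP => KT; have := @Tpp_cst R X 1; rewrite -KT => -[_ /eqP].
  by rewrite oner_eq0.
move=> J idJ KJ JnT; apply/seteqP; split=> // j Jj.
split; first exact: ideal_sub Jj.
apply/eqP; apply: contraNT JnT => jx_neq0; apply/eqP.
(* [j - j(x)] lies in the kernel, so the nonzero constant [j(x)] lies in [J]. *)
have Jjx : J (fun _ => j x).
  have Kjx : eval_kernel x (j \- fun _ => j x).
    by split; [apply: TppB; [exact: ideal_sub Jj|exact: Tpp_cst]|rewrite /= subrr].
  have -> : (fun _ => j x) = j \- (j \- fun _ => j x).
    by apply/funext => y /=; rewrite subKr.
  exact: idealB (KJ _ Kjx).
exact: ideal_eqT_nowhere_zero Jjx _.
Qed.

Lemma Zset_sub_Mof (a f : X -> R) : Tpp a -> Mof a f -> Zset a `<=` Zset f.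
Proof.
move=> Ta [_ Mf] x ax.
by have [] := Mf _ (eval_kernel_maximal x) (conj Ta ax).
Qed.

End EvaluationKernel.

Section MaximalIdeals.
Variables (R : realType) (X : topologicalType) (M : set (X -> R)).
Implicit Types (f g : X -> R).

Definition ideal_adjoin f : set (X -> R) :=
  [set k | exists m t, [/\ M m, Tpp t & k = m \+ t \* f]].

Lemma ideal_adjoin_ideal f : is_ideal M -> Tpp f -> is_ideal (ideal_adjoin f).
Proof.
move=> idM Tf; split.
- move=> _ [m [t [Mm Tt ->]]]; apply: TppD; first exact: ideal_sub Mm.
  exact: TppM.
- exists (fun _ => 0), (fun _ => 0); split; [exact: ideal0|exact: Tpp_cst|].
  by apply/funext => x /=; rewrite mul0r addr0.
- move=> _ _ [m1 [t1 [M1 T1 ->]]] [m2 [t2 [M2 T2 ->]]].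
  exists (m1 \- m2), (t1 \- t2); split; [exact: idealB|exact: TppB|].
  by apply/funext => x /=; rewrite mulrBl addrACA opprD.
- move=> s _ Ts [m [t [Mm Tt ->]]].
  exists (s \* m), (s \* t); split; [exact: idealM|exact: TppM|].
  by apply/funext => x /=; rewrite mulrDr mulrA.
Qed.

Lemma maximal_ideal_adjoin_one f :
  is_maximal_ideal M -> Tpp f -> ~ M f -> ideal_adjoin f (fun _ => 1).
Proof.
move=> [idM _ maxM] Tf nMf.
have idJ := ideal_adjoin_ideal idM Tf.
have MJ : M `<=` ideal_adjoin f.
  move=> m Mm; exists m, (fun _ => 0); split=> //; first exact: Tpp_cst.
  by apply/funext => x /=; rewrite mul0r addr0.
have Jf : ideal_adjoin f f.
  exists (fun _ => 0), (fun _ => 1); split; [exact: ideal0|exact: Tpp_cst|].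
  by apply/funext => x /=; rewrite mul1r add0r.
have [JT|JnT] := eqVneq (ideal_adjoin f) (@Tpp R X).
  by rewrite JT; exact: Tpp_cst.
by move: Jf; rewrite (maxM _ idJ MJ JnT).
Qed.

Lemma maximal_ideal_Zset_closed f g : is_maximal_ideal M ->
  M g -> Tpp f -> Zset g `<=` Zset f -> M f.
Proof.
move=> maxM Mg Tf Zgf; have [idM MnT _] := maxM.
apply: contrapT => nMf.
have [m [t [Mm Tt one_eq]]] := maximal_ideal_adjoin_one maxM Tf nMf.
have Mu := idealD idM (idealM idM (ideal_sub idM Mm) Mm)
                      (idealM idM (ideal_sub idM Mg) Mg).
suff nz : forall x, m x * m x + g x * g x != 0.
  by move/eqP: MnT; apply; exact: ideal_eqT_nowhere_zero Mu nz.
move=> x; rewrite -!expr2 paddr_eq0 ?sqr_ge0 // !sqrf_eq0.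
apply/negP => /andP[/eqP mx0 /eqP gx0].
have := congr1 (fun k => k x) one_eq.
by rewrite /= mx0 (Zgf x gx0) mulr0 addr0; apply/eqP; rewrite oner_neq0.
Qed.

End MaximalIdeals.

Theorem corollary5p2 (R : realType) (X : topologicalType)
  (hT1 : @accessible_space X) (I : set (X -> R)) (hI : is_ideal I) :
  is_z_ideal I <->
  (forall f g : X -> R, Tpp f -> I g -> Zset g `<=` Zset f -> I f).
Proof.
split.
- move=> zI f g Tf Ig Zgf; apply: (zI g Ig); split=> // M maxM Mg.
  exact: maximal_ideal_Zset_closed Mg Tf Zgf.
- move=> closedI a Ia f Maf; apply: (closedI f a Maf.1 Ia).
  exact: Zset_sub_Mof (ideal_sub hI Ia) Maf.
Qed.
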